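(* An abelian subgroup of the symmetric group $S_n$ can be expressed as a direct product of at most $n/2$ non-trivial groups. *)

From mathcomp Require Import all_boot all_fingroup all_solvable.

From mathcomp Require Import all_boot all_fingroup all_solvable.
From mathcomp Require Import zify.

(* By the structure theorem, an abelian group A is the direct product of
   'r(A) nontrivial cyclic groups, and 'r(A) is the p-rank of A for some prime
   p, which is at most logn p #|A|.  It thus suffices to show that an abelian
   permutation group E moves at least 2 * logn p #|E| points.  Pick a moved
   point x with stabiliser S in E: by commutativity S fixes the whole orbit of
   x, whose points are all moved by E, so the support of S and this orbit are
   disjoint parts of the support of E.  The orbit has #|E : S| points, and
   2 * logn p m <= m for every m > 0, so induction on #|E| concludes. *)

Set Implicit Arguments.
Unset Strict Implicit.
Unset Printing Implicit Defensive.
Local Open Scope group_scope.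

Lemma double_leq_exp2 a : (2 * a <= 2 ^ a)%N.
Proof.
case: a => // a; rewrite expnS leq_pmul2l //.
exact: ltn_expl.
Qed.

Lemma double_logn_leq p m : (0 < m)%N -> (2 * logn p m <= m)%N.
Proof.
move=> m_gt0; have [p_pr | /negbTE p_npr] := boolP (prime p); last first.
  by rewrite /logn p_npr.
apply: leq_trans (double_leq_exp2 _) _.
apply: leq_trans (dvdn_leq m_gt0 (pfactor_dvdnn p m)).
by case: (logn p m) => // a; rewrite leq_exp2r ?prime_gt1.
Qed.

Section PermSupport.

Variable T : finType.

Definition perm_support (E : {set {perm T}}) : {set T} :=
  [set x | [exists s in E, s x != x]].

Lemma perm_supportP (E : {set {perm T}}) x :
  reflect (exists2 s, s \in E & s x != x) (x \in perm_support E).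
Proof. by rewrite inE; apply: exists_inP. Qed.

Lemma perm_supportS (E F : {set {perm T}}) :
  E \subset F -> perm_support E \subset perm_support F.
Proof.
move=> sEF; apply/subsetP => x /perm_supportP[s sE sx].
by apply/perm_supportP; exists s; first exact: (subsetP sEF).
Qed.

Lemma perm_support_eq0_trivg (E : {set {perm T}}) :
  perm_support E = set0 -> E \subset [1].
Proof.
move=> suppE0; apply/subsetP => s sE; rewrite inE; apply/eqP/permP => y.
rewrite perm1; apply/eqP/negPn/negP => sy.
suff : y \in perm_support E by rewrite suppE0 inE.
by apply/perm_supportP; exists s.
Qed.

Variable E : {group {perm T}}.
Hypothesis cE : abelian E.

Lemma orbit_sub_perm_support x :
  x \in perm_support E -> orbit 'P E x \subset perm_support E.
Proof.
case/perm_supportP => g gE gx; apply/subsetP => _ /orbitP[h hE <-].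
apply/perm_supportP; exists g => //=; apply: contra gx => /eqP ghx.
by rewrite -(inj_eq (@perm_inj _ h)) -!permM (centsP cE g) // permM ghx.
Qed.

Lemma perm_support_astab1_disjoint_orbit x :
  [disjoint perm_support 'C_E[x | 'P] & orbit 'P E x].
Proof.
apply/pred0P => y /=; apply/andP.
case=> /perm_supportP[s sS sy] /orbitP[h hE hx].
case/setIP: sS => sE /astab1P; rewrite /= /aperm => sx.
by rewrite -hx /aperm -permM -(centsP cE s) // permM sx eqxx in sy.
Qed.

End PermSupport.

Lemma double_logn_card_leq_perm_support
    (T : finType) p (E : {group {perm T}}) :
  abelian E -> (2 * logn p #|E| <= #|perm_support E|)%N.
Proof.
have [m] := ubnP #|E|; elim: m E => // m IHm E ltEm cE.
have [suppE0 | /set0Pn[x suppEx]] := eqVneq (perm_support E) set0.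
  by rewrite (trivGP (perm_support_eq0_trivg suppE0)) cards1 logn1.
set S := 'C_E[x | 'P]%G; set O := orbit 'P E x.
have sSE : S \subset E := subsetIl _ _.
have ltSE : (#|S| < #|E|)%N.
  apply/proper_card/properP; split=> //.
  have /perm_supportP[g gE gx] := suppEx.
  by exists g; rewrite // inE gE; apply: contra gx => /astab1P/eqP.
have logE : logn p #|E| = (logn p #|S| + logn p #|E : S|)%N.
  by rewrite -(Lagrange sSE) lognM ?cardG_gt0 ?indexg_gt0.
have suppSO : (#|perm_support S| + #|O| <= #|perm_support E|)%N.
  have /leqifP := leq_card_setU (perm_support S) O.
  rewrite perm_support_astab1_disjoint_orbit // => /eqP <-.
  by rewrite subset_leq_card // subUset perm_supportS // orbit_sub_perm_support.
have := IHm S (leq_trans ltSE (ltnSE ltEm)) (abelianS sSE cE).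
have := double_logn_leq p (indexg_gt0 E S).
rewrite -{2}(card_orbit 'P E x) -/O logE; lia.
Qed.

Lemma double_rank_leq_perm_support (T : finType) (A : {group {perm T}}) :
  abelian A -> (2 * 'r(A) <= #|perm_support A|)%N.
Proof.
move=> cA; have [p _ ->] := rank_witness A.
apply: leq_trans (double_logn_card_leq_perm_support p cA).
by rewrite leq_mul2l p_rank_le_logn orbT.
Qed.

Lemma abelian_rank_nontrivial_dprod (gT : finGroupType) (A : {group gT}) :
  abelian A ->
  exists H : 'I_('r(A)) -> {group gT},
    (forall i, H i :!=: 1) /\ \big[dprod/1]_(i < 'r(A)) H i = A.
Proof.
move=> cA; have [b defA typeA] := abelian_structure cA.
have sizeb : size b = 'r(A) by rewrite -size_abelian_type // -typeA size_map.
rewrite -sizeb; exists (fun i : 'I_(size b) => <[nth 1%g b i]>%G); split.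
- move=> i; rewrite trivg_card1 -/(order _) neq_ltn orbC.
  have /allP/(_ #[nth 1 b i]) ordb_gt1 := abelian_type_gt1 A.
  by rewrite [_ < _]ordb_gt1 // -typeA map_f ?mem_nth.
- by rewrite -defA (big_nth 1) big_mkord.
Qed.

Theorem mainTheorem8 (n : nat) (A : {group {perm 'I_n}}) :
  abelian A ->
  exists (k : nat) (H : 'I_k -> {group {perm 'I_n}}),
    [/\ (2 * k <= n)%N,
        (forall i, H i :!=: 1%g)
      & (\big[dprod/1%g]_(i < k) H i)%g = A].
Proof.
move=> cA; have [H [ntH defA]] := abelian_rank_nontrivial_dprod cA.
exists 'r(A), H; split=> //.
rewrite -[n in (_ <= n)%N]card_ord.
exact: leq_trans (double_rank_leq_perm_support cA) (max_card _).
Qed.
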